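(* Let $d\ge 1$ and $2\le n_1\le n_2\le\cdots\le n_d$ be integers, and let $G=K_{n_1}\times K_{n_2}\times\cdots\times K_{n_d}$. Then $\sigma_T(G)\le 2d-1$ if $n_1=2$, and $\sigma_T(G)\le 2d$ if $n_1\ge 3$.
   Context: $K_n$ is the complete graph on $n$ vertices and $\times$ is the Cartesian product of graphs. Thus $G$ has vertex set $\{(x_1,\dots,x_d): x_i\in\{0,1,\dots,n_i-1\}\}$, two vertices being adjacent iff they differ in exactly one coordinate (a Hamming graph). For a spanning tree $T$ of a connected graph $G$, $d_T(u,v)$ is the distance between $u$ and $v$ in $T$, $\sigma_T(G,T):=\max_{uv\in E(G)} d_T(u,v)$, and the tree-stretch is $\sigma_T(G):=\min\{\sigma_T(G,T): T \text{ a spanning tree of } G\}$. *)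

From mathcomp Require Import all_boot.
Set Implicit Arguments. Unset Strict Implicit. Unset Printing Implicit Defensive.

Section Graphs.
Variable V : finType.

(* An (undirected) subgraph is given by a set of ordered pairs, meant to be symmetric. *)
Definition trel (T : {set V * V}) : rel V := fun x y => (x, y) \in T.

(* Graph distance in the graph with adjacency e: the least k such that there is a walk
   u = x_0, x_1, ..., x_k = v of length k (k ranges over 0..#|V|-1, which suffices in a
   connected graph; #|V| is returned when v is unreachable). *)
Definition dist (e : rel V) (u v : V) : nat :=
  find (fun k => [exists p : k.-tuple V, path e u p && (last u p == v)]) (iota 0 #|V|).

(* No cycle x_1 ... x_k (k >= 3, distinct vertices) in the graph e.  A sequence of distinct
   vertices has length at most #|V|, so k is bounded by #|V|. *)
Definition acyclic (e : rel V) : bool :=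
  [forall k : 'I_#|V|.+1, forall p : (val k).-tuple V,
     ~~ [&& 3 <= val k, uniq p & cycle e p]].

Definition spanning_tree (G : rel V) (T : {set V * V}) : bool :=
  [&& [forall x, forall y, ((x, y) \in T) ==> G x y],
      [forall x, forall y, ((x, y) \in T) ==> ((y, x) \in T)],
      [forall x, forall y, connect (trel T) x y] &
      acyclic (trel T)].

Definition stretch (G : rel V) (T : {set V * V}) : nat :=
  \max_(u : V) \max_(v : V | G u v) dist (trel T) u v.

(* sigma_T(G) = min over spanning trees T of sigma_T(G, T)
   (the default #|V| is only used if G has no spanning tree). *)
Definition tree_stretch (G : rel V) : nat :=
  \big[minn/#|V|]_(T : {set V * V} | spanning_tree G T) stretch G T.

End Graphs.

Definition hvert (d : nat) (n : nat -> nat) : finType :=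
  {dffun forall i : 'I_d, 'I_(n i)}.

Definition hamming_adj (d : nat) (n : nat -> nat) : rel (hvert d n) :=
  fun u v => #|[set i : 'I_d | u i != v i]| == 1.
Arguments hamming_adj : clear implicits.
Arguments hvert : clear implicits.

From mathcomp Require Import all_boot.
From mathcomp Require Import zify.
Set Implicit Arguments. Unset Strict Implicit. Unset Printing Implicit Defensive.

(* Root a spanning tree at the all-zero vertex, the parent of x being x with
   its last nonzero coordinate set to 0; the coordinate sum drops towards the
   root, so there is no cycle.  Zeroing the coordinates of x from position m on
   takes at most d - m tree steps.  Vertices u, v adjacent in coordinate i agree
   once coordinates i, i+1, ... are zeroed, which gives a tree walk of length
   at most 2 (d - i - 1) + [u_i <> 0] + [v_i <> 0].  This is at most 2d - 2 for
   i > 0, and for i = 0 it is at most 2d, or 2d - 1 when n_1 = 2 because then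
   one of u_1 <> v_1 is 0. *)

Section Walks.
Variables (T : finType) (e : rel T).

Inductive walk : nat -> T -> T -> Prop :=
  | walk0 u : walk 0 u u
  | walkS k u v w : e u v -> walk k v w -> walk k.+1 u w.

Lemma walk_cat a b x y z : walk a x y -> walk b y z -> walk (a + b) x z.
Proof.
elim=> [u|k u v w euv _ IH] wb; first by rewrite add0n.
by rewrite addSn; apply: walkS euv (IH wb).
Qed.

Lemma walk1 x y : e x y -> walk 1 x y.
Proof. by move=> exy; apply: walkS exy (walk0 y). Qed.

Lemma walk_rev : symmetric e -> forall k x y, walk k x y -> walk k y x.
Proof.
move=> e_sym k x y; elim=> [u|k' u v w euv _ IH]; first exact: walk0.
by rewrite -addn1; apply: walk_cat IH (walk1 _); rewrite e_sym.
Qed.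

Lemma walk_path k x y :
  walk k x y -> exists p : k.-tuple T, path e x p && (last x p == y).
Proof.
elim=> [u|k' u v w euv _ [p /andP [ep /eqP <-]]].
  by exists [tuple]; rewrite /= eqxx.
by exists (cons_tuple v p); rewrite /= euv ep eqxx.
Qed.

Lemma dist_leq_walk k x y : walk k x y -> dist e x y <= k.
Proof.
move=> /walk_path wxy; rewrite /dist.
have [k_lt|k_ge] := ltnP k #|T|; last first.
  by apply: leq_trans (find_size _ _) _; rewrite size_iota.
rewrite leqNgt; apply/negP => /(before_find 0).
by rewrite nth_iota // add0n => /negbT/negP; apply; apply/existsP.
Qed.

Lemma connect_walk k x y : walk k x y -> connect e x y.
Proof. by move/walk_path=> [p /andP [ep /eqP xy]]; apply/connectP; exists p. Qed.

End Walks.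

Section Stretch.
Variables (V : finType) (G : rel V).

Lemma tree_stretch_leq T : spanning_tree G T -> tree_stretch G <= stretch G T.
Proof.
move=> GT; rewrite /tree_stretch.
elim: (index_enum _) (mem_index_enum T) => [//|a s IH]; rewrite inE big_cons.
case/orP=> [/eqP <- | sT]; first by rewrite GT geq_minl.
by case: ifP => _; [apply: leq_trans (geq_minr _ _) _|]; apply: IH.
Qed.

Lemma stretch_leq T B :
  (forall u v, G u v -> dist (trel T) u v <= B) -> stretch G T <= B.
Proof. by move=> dB; apply/bigmax_leqP => u _; apply/bigmax_leqP => v; apply: dB. Qed.

End Stretch.

Lemma hamming_adj_sym d n : symmetric (hamming_adj d n).
Proof.
move=> u v; rewrite /hamming_adj; congr (_ == 1).
by apply: eq_card => i; rewrite !inE eq_sym.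
Qed.

Lemma hamming_adjP d n (u v : hvert d n) : hamming_adj d n u v ->
  exists i, u i != v i /\ forall j, j != i -> u j = v j.
Proof.
move/cards1P=> [i uv_i]; exists i; split.
  by have := set11 i; rewrite -uv_i inE.
move=> j ji; apply/eqP; apply: contraNT ji => uv_j.
by rewrite -in_set1 -uv_i inE.
Qed.

Lemma neq_bits_nz (a b : nat) : a < 2 -> b < 2 -> a != b -> (a != 0) + (b != 0) <= 1.
Proof. by case: a => [|[|]]; case: b => [|[|]]. Qed.

Section ParentTree.
Variables (d : nat) (n : nat -> nat).
Hypothesis n_gt0 : forall i : 'I_d, 0 < n i.
Local Notation V := (hvert d n).

Definition trunc (m : nat) (x : V) : V :=
  [ffun i : 'I_d => if m <= i then Ordinal (n_gt0 i) else x i].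

Definition nzcoord (x : V) (i : 'I_d) : bool := x i != 0 :> nat.

(* [trunc j.+1 x == x] makes [j] the last nonzero coordinate of [x]. *)
Definition parent (x y : V) : bool :=
  [exists j : 'I_d, [&& nzcoord x j, y == trunc j x & trunc j.+1 x == x]].

Definition parent_tree : {set V * V} := [set p | parent p.1 p.2 || parent p.2 p.1].

Definition weight (x : V) : nat := \sum_(i < d) (x i : nat).

Lemma trunc_trunc a b x : trunc a (trunc b x) = trunc (minn a b) x.
Proof. by apply/ffunP => i; rewrite !ffunE geq_min; case: (a <= i); case: (b <= i). Qed.

Lemma trunc_full x : trunc d x = x.
Proof. by apply/ffunP => i; rewrite ffunE leqNgt ltn_ord. Qed.

Lemma trunc0 x y : trunc 0 x = trunc 0 y.
Proof. by apply/ffunP => i; rewrite !ffunE. Qed.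

Lemma nzcoord_truncS (i : 'I_d) x : nzcoord (trunc i.+1 x) i = nzcoord x i.
Proof. by rewrite /nzcoord ffunE ltnn. Qed.

Lemma parent_truncS (i : 'I_d) x : nzcoord x i -> parent (trunc i.+1 x) (trunc i x).
Proof.
move=> nz_i; apply/existsP; exists i.
by rewrite nzcoord_truncS nz_i !trunc_trunc minnn (minn_idPl (leqnSn _)) !eqxx.
Qed.

Lemma truncS_zero (i : 'I_d) x : ~~ nzcoord x i -> trunc i.+1 x = trunc i x.
Proof.
move/negbNE/eqP=> x_i; apply/ffunP => j; rewrite !ffunE.
case: ltngtP => // /val_inj <-.
exact: val_inj.
Qed.

Local Notation tree := (trel parent_tree).

Lemma parent_tree_sym : symmetric tree.
Proof. by move=> x y; rewrite /trel !inE /= orbC. Qed.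

Lemma tree_parent x y : parent x y -> tree x y.
Proof. by rewrite /trel inE /= => ->. Qed.

Lemma walk_truncS (i : 'I_d) x : walk tree (nzcoord x i) (trunc i.+1 x) (trunc i x).
Proof.
have [nz_i|/truncS_zero ->] := boolP (nzcoord x i); last exact: walk0.
exact/walk1/tree_parent/parent_truncS.
Qed.

Lemma walk_trunc_sub t x : t <= d -> exists2 k, k <= t & walk tree k x (trunc (d - t) x).
Proof.
elim: t => [|t IH] td; first by exists 0; rewrite // subn0 trunc_full; apply: walk0.
have [k kt wk] := IH (ltnW td).
have lt_i : d - t.+1 < d by lia.
have := walk_truncS (Ordinal lt_i) x; rewrite /= (_ : (d - t.+1).+1 = d - t); last by lia.
move=> w1; exists (k + nzcoord x (Ordinal lt_i)); last exact: walk_cat wk w1.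
by apply: leq_trans (leq_add kt (leq_b1 _)) _; rewrite addn1.
Qed.

Lemma walk_trunc m x : m <= d -> exists2 k, k <= d - m & walk tree k x (trunc m x).
Proof. by move=> md; have := walk_trunc_sub x (leq_subr m d); rewrite subKn. Qed.

Lemma parent_adj x y : parent x y -> hamming_adj d n x y.
Proof.
case/existsP=> j /and3P [nz_j /eqP -> /eqP xj].
apply/eqP; rewrite -(cards1 j); apply: eq_card => i; rewrite !inE ffunE.
case: (ltngtP j i) => [ji|ij|/val_inj eji]; last first.
- by subst i; rewrite eqxx; apply: contra nz_j => /eqP ->.
- by rewrite eqxx; apply/esym/eqP => eij; rewrite eij ltnn in ij.
have := congr1 (fun f : V => f i) xj; rewrite /= ffunE ji => <-.
by rewrite eqxx; apply/esym/eqP => eij; rewrite eij ltnn in ji.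
Qed.

Lemma parent_weight x y : parent x y -> weight y < weight x.
Proof.
case/existsP=> j /and3P [nz_j /eqP -> _].
rewrite /weight (bigD1 j) //= [X in _ < X](bigD1 j) //= ffunE leqnn add0n.
have le_rest : \sum_(i < d | i != j) (trunc j x i : nat) <= \sum_(i < d | i != j) (x i : nat).
  by apply: leq_sum => i _; rewrite ffunE; case: ifP.
by apply: (leq_ltn_trans le_rest); rewrite -[X in X < _]add0n ltn_add2r lt0n.
Qed.

Lemma parent_uniq x y z : parent x y -> parent x z -> y = z.
Proof.
case/existsP=> j /and3P [nz_j /eqP -> /eqP xj].
case/existsP=> k /and3P [nz_k /eqP -> /eqP xk].
have zero_above (i l : 'I_d) : trunc i.+1 x = x -> i < l -> ~~ nzcoord x l.
  by move=> xi il; rewrite -xi /nzcoord ffunE il.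
by case: (ltngtP j k) => [/(zero_above _ _ xj)|/(zero_above _ _ xk)|/val_inj ->];
  rewrite ?nz_j ?nz_k.
Qed.

Lemma tree_down_parent x y : tree x y -> weight y <= weight x -> parent x y.
Proof.
rewrite /trel inE /= => /orP [//|/parent_weight yx].
by rewrite leqNgt yx.
Qed.

(* A vertex of maximal weight on a cycle would have both cycle neighbours as parent. *)
Lemma parent_tree_no_cycle (p : seq V) : 3 <= size p -> uniq p -> ~~ cycle tree p.
Proof.
case: p => [//|x0 p0] p_ge3 up; apply/negP => cp.
have [x px x_max] := @arg_maxnP V x0 (mem (x0 :: p0)) weight (mem_head _ _).
have [i s p_rot] := rot_to px.
move: p_ge3 up cp; rewrite -(size_rot i) -(rot_uniq i) -(rot_cycle i) p_rot.
have s_in y : y \in s -> weight y <= weight x.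
  by move=> sy; apply: x_max; rewrite /= -(mem_rot i) p_rot inE sy orbT.
case: s s_in {p_rot} => [|y [|w r]] //= s_in _ /and4P [_ yr _ _].
rewrite rcons_path => /and3P [xy _ /andP [_ lx]].
have px_y := tree_down_parent xy (s_in y (mem_head _ _)).
rewrite parent_tree_sym in lx.
have l_in : last w r \in [:: y, w & r] by rewrite inE mem_last orbT.
have px_l := tree_down_parent lx (s_in _ l_in).
by move: yr; rewrite (parent_uniq px_y px_l) mem_last.
Qed.

Lemma parent_tree_spanning : spanning_tree (hamming_adj d n) parent_tree.
Proof.
apply/and4P; split.
- apply/forallP => x; apply/forallP => y; apply/implyP.
  by rewrite inE /= => /orP [/parent_adj | /parent_adj]; rewrite // hamming_adj_sym.
- by apply/forallP => x; apply/forallP => y; apply/implyP; rewrite !inE /= orbC.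
- apply/forallP => x; apply/forallP => y.
  have [a _ wx] := walk_trunc x (leq0n d); have [b _ wy] := walk_trunc y (leq0n d).
  rewrite (trunc0 y x) in wy.
  exact: connect_walk (walk_cat wx (walk_rev parent_tree_sym wy)).
- apply/forallP => k; apply/forallP => p; apply/negP => /and3P [k3 up cp].
  by rewrite -(size_tuple p) in k3; move: cp; apply/negP/parent_tree_no_cycle.
Qed.

Lemma dist_adj_parent_tree (u v : V) (i : 'I_d) :
  (forall j, j != i -> u j = v j) ->
  dist tree u v <= 2 * (d - i.+1) + (nzcoord u i + nzcoord v i).
Proof.
move=> uv_j.
have common : trunc i v = trunc i u.
  apply/ffunP => j; rewrite !ffunE; case: leqP => // ji.
  by apply/esym/uv_j; apply: contraTneq ji => ->; rewrite ltnn.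
have [a a_le wu] := walk_trunc u (ltn_ord i).
have [b b_le wv] := walk_trunc v (ltn_ord i).
have wu' := walk_truncS i u; have wv' := walk_truncS i v; rewrite common in wv'.
have w := walk_cat wu (walk_cat wu' (walk_rev parent_tree_sym (walk_cat wv wv'))).
apply: leq_trans (dist_leq_walk w) _; lia.
Qed.

Lemma nzcoord_neq_leq (u v : V) (i : 'I_d) :
  u i != v i -> nzcoord u i + nzcoord v i <= 2 - (n i == 2).
Proof.
move=> uv_i; have [ni2|_] := eqVneq (n i) 2.
  by apply: neq_bits_nz; rewrite -?ni2 ?ltn_ord.
by case: (nzcoord u i); case: (nzcoord v i).
Qed.

End ParentTree.

Theorem lemma3p1 (d : nat) (n : nat -> nat)
  (hd : 1 <= d)
  (hn : forall i, i < d -> 2 <= n i)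
  (hmono : forall i j, i <= j -> j < d -> n i <= n j) :
  (n 0 = 2 -> tree_stretch (hamming_adj d n) <= 2 * d - 1) /\
  (3 <= n 0 -> tree_stretch (hamming_adj d n) <= 2 * d).
Proof.
have n_gt0 (i : 'I_d) : 0 < n i by apply: leq_trans (hn i (ltn_ord i)).
suff : tree_stretch (hamming_adj d n) <= 2 * d - (n 0 == 2).
  by move=> le_B; split=> [n0|/gtn_eqF n0]; move: le_B; rewrite n0 ?subn0.
apply: leq_trans (tree_stretch_leq (parent_tree_spanning n_gt0)) _.
apply: stretch_leq => u v /hamming_adjP [i [uv_i uv_j]].
apply: leq_trans (dist_adj_parent_tree n_gt0 uv_j) _.
have := nzcoord_neq_leq uv_i; have := ltn_ord i.
by case: (posnP i) => [->|i_gt0]; lia.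
Qed.
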